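(* Let $(R,\mathfrak m,k)$ be a Noetherian local ring, $j\ge2$, and $M$ a finitely generated $R$-module with $\operatorname{pd}_RM=2$ satisfying the $(SW_j)$ condition. Write $\beta_i=\beta_i^R(M)$. Then for all $t=0,1,\dots,\operatorname{pd}_R\mathcal S_j(M)$: (a) if $j\ge t$, $\beta_t^R(\mathcal S_j(M))=\sum_{r=0}^{\lfloor t/2\rfloor}\binom{\beta_2+r-1}{r}\binom{\beta_1}{t-2r}\binom{\beta_0+j-t+r-1}{j-t+r}$; (b) if $j<t$, $\beta_t^R(\mathcal S_j(M))=\sum_{r=t-j}^{\min\{j,\lfloor t/2\rfloor\}}\binom{\beta_2+r-1}{r}\binom{\beta_1}{t-2r}\binom{\beta_0+j-t+r-1}{j-t+r}$.
   Context: $\beta_i^R(N)$ is the $i$-th Betti number (rank of the $i$-th module in a minimal free resolution of $N$). $\mathcal S_j(M)$ is the $j$-th graded component of the symmetric algebra $\mathcal S_R(M)$. For a free module $F$ of finite rank, $D_a(F)$ is the $a$-th divided power (symmetric tensors in $F^{\otimes a}$; free with basis the divided power monomials $f_1^{(c_1)}\cdots f_r^{(c_r)}$, $\sum c_l=a$), $\Lambda^aF$ the $a$-th exterior power. For a finite free resolution $\mathbf F_\bullet:0\to F_p\xrightarrow{\phi_p}\cdots\xrightarrow{\phi_1}F_0$ of $M$, the complex $\mathcal S_j\mathbf F_\bullet$ has $(\mathcal S_j\mathbf F_\bullet)_t=\bigoplus D_{a_0}F_0\otimes\Lambda^{a_1}F_1\otimes D_{a_2}F_2\otimes\cdots$,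 summed over $(a_0,\dots,a_p)\in\mathbb N^{p+1}$ with $\sum a_i=j$, $\sum ia_i=t$; the differential maps the summand indexed by $(a_0,\dots,a_p)$ only to summands indexed by $(a_0,\dots,a_i+1,a_{i+1}-1,\dots,a_p)$, by $(-1)^{a_0+2a_1+\cdots+(i+1)a_i}$ times identity on other factors tensored with: for $i$ odd, $f_1^{(c_1)}\cdots f_r^{(c_r)}\otimes v\mapsto\sum_lf_1^{(c_1)}\cdots f_l^{(c_l-1)}\cdots f_r^{(c_r)}\otimes\phi_{i+1}(f_l)\wedge v$; for $i$ even, $f_{l_1}\wedge\cdots\wedge f_{l_a}\otimes w\mapsto\sum_s(-1)^sf_{l_1}\wedge\cdots\widehat{f_{l_s}}\cdots\wedge f_{l_a}\otimes\phi_{i+1}(f_{l_s})\cup w$, where $g_m\cup g_1^{(c_1)}\cdots g_n^{(c_n)}$ raises $c_m$ by one. Standing assumption: the characteristic of $R$ is such that $\mathcal S_j\mathbf F_\bullet$ is a complex (e.g. all integers $2\le m\le jp$ are units in $R$). A free resolution is minimal if $\operatorname{Im}\phi_i\subseteq\mathfrak mF_{i-1}$. $M$ satisfies the $(SW_j)$ condition if, for a finite minimal free resolution $\mathbf F_\bullet$ of $M$, $\mathcal S_j\mathbf F_\bullet$ is a finite free resolution of $\mathcal S_j(M)$. *)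

From HB Require Import structures.
From mathcomp Require Import all_boot all_order fingroup perm all_algebra.
From Stdlib Require Import ClassicalEpsilon.
Set Implicit Arguments.
Unset Strict Implicit.
Unset Printing Implicit Defensive.
Import Order.TTheory GRing.Theory.
Local Open Scope ring_scope.

Section Defs.
Variable R : comNzRingType.

Definition is_unit (x : R) : Prop := exists y, x * y = 1.
Definition in_max (x : R) : Prop := ~ is_unit x.
(* local ring (R is nontrivial as a comNzRingType): the non-units are
   closed under addition, i.e. they form the unique maximal ideal. *)
Definition local_ring : Prop :=
  forall x y, in_max x -> in_max y -> in_max (x + y).

Definition is_ideal (I : R -> Prop) : Prop :=
  I 0 /\ (forall x y, I x -> I y -> I (x + y)) /\ (forall r x, I x -> I (r * x)).

Definition noetherian : Prop :=
  forall I, is_ideal I -> exists s : seq R,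
    forall x, I x <-> exists c : nat -> R, x = \sum_(i < size s) c i * s`_i.

Definition fin_gen (M : lmodType R) : Prop :=
  exists s : seq M, forall v : M, exists c : nat -> R,
    v = \sum_(i < size s) c i *: s`_i.

(* A free resolution  ... -> F_2 -> F_1 -> F_0 -> N -> 0.
   F i is a finite type indexing a basis of the i-th free module
   (rank #|F i|); d i x y is the coefficient of the basis vector y of F_i in
   the image of the basis vector x of F_{i+1}; e x is the image of the basis
   vector x of F_0 in N. *)
Definition is_resolution (N : lmodType R) (F : nat -> finType)
    (d : forall i, F i.+1 -> F i -> R) (e : F 0%N -> N) : Prop :=
  (forall n : N, exists v : F 0%N -> R, n = \sum_x v x *: e x) /\
  (forall v : F 0%N -> R, \sum_x v x *: e x = 0 <->
      exists w : F 1%N -> R, forall y, v y = \sum_x w x * d 0%N x y) /\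
  (forall i (v : F i.+1 -> R), (forall z, \sum_y v y * d i y z = 0) <->
      exists w : F i.+2 -> R, forall y, v y = \sum_x w x * d i.+1 x y).

Definition is_minimal (F : nat -> finType) (d : forall i, F i.+1 -> F i -> R)
  : Prop := forall i x y, in_max (d i x y).

Definition length_le (F : nat -> finType) (n : nat) : Prop :=
  forall i, (n < i)%N -> #|F i| = 0%N.

Definition betti (N : lmodType R) (i : nat) : nat :=
  epsilon (inhabits 0%N) (fun n => exists F d e,
    @is_resolution N F d e /\ is_minimal d /\ #|F i| = n).

Definition is_pd (N : lmodType R) (n : nat) : Prop :=
  (exists F d e, @is_resolution N F d e /\ length_le F n) /\
  (forall m, (exists F d e, @is_resolution N F d e /\ length_le F m) ->
     (n <= m)%N).

Definition ffset (M : lmodType R) j (f : {ffun 'I_j -> M}) (i : 'I_j) (w : M)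
  : {ffun 'I_j -> M} := [ffun k => if k == i then w else f k].

Definition sym_multilinear (M P : lmodType R) j (g : {ffun 'I_j -> M} -> P)
  : Prop :=
  (forall (f : {ffun 'I_j -> M}) i (a : R) (u v : M),
     g (ffset f i (a *: u + v)) = a *: g (ffset f i u) + g (ffset f i v)) /\
  (forall (f : {ffun 'I_j -> M}) (s : 'S_j), g [ffun k => f (s k)] = g f).

Definition lin (P Q : lmodType R) (h : P -> Q) : Prop :=
  forall (a : R) (x y : P), h (a *: x + y) = a *: h x + h y.

Definition is_sym_power (j : nat) (M N : lmodType R)
    (sigma : {ffun 'I_j -> M} -> N) : Prop :=
  sym_multilinear sigma /\
  forall (P : lmodType R) (g : {ffun 'I_j -> M} -> P), sym_multilinear g ->
    exists h : N -> P, lin h /\ (forall f, h (sigma f) = g f) /\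
      forall h' : N -> P, lin h' -> (forall f, h' (sigma f) = g f) ->
        forall x, h' x = h x.

Section SjComplex.
Variables (F0 F1 F2 : finType) (phi1 : F1 -> F0 -> R) (phi2 : F2 -> F1 -> R).
Variable j : nat.

(* basis element of D_{a0}F0 (x) Lambda^{a1}F1 (x) D_{a2}F2:
   exponent vector c0, subset S0, exponent vector c2 *)
Definition sj_base : finType :=
  ({ffun F0 -> 'I_j.+1} * {set F1} * {ffun F2 -> 'I_j.+1})%type.

Definition mdeg (T : finType) (c : {ffun T -> 'I_j.+1}) : nat :=
  (\sum_x (c x : nat))%N.

Definition sj_ok (t : nat) (x : sj_base) : bool :=
  (mdeg x.1.1 + #|x.1.2| + mdeg x.2 == j)%N &&
  (#|x.1.2| + (mdeg x.2).*2 == t)%N.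

(* basis of (S_j F)_t *)
Definition SjIdx (t : nat) : finType := {x : sj_base | sj_ok t x}.

(* wedge basis ordered by enum_rank *)
Definition nbefore (S0 : {set F1}) (l : F1) : nat :=
  #|[set k in S0 | (enum_rank k < enum_rank l)%N]|.

(* the differential (S_j F)_{t+1} -> (S_j F)_t, coefficient of y in d(x) *)
Definition SjD (t : nat) (x : SjIdx t.+1) (y : SjIdx t) : R :=
  let: (c0, S0, c2) := val x in
  let: (c0', S', c2') := val y in
  (* move i = 0 : Lambda^{a1}F1 (x) D_{a0}F0 -> Lambda^{a1-1}F1 (x) D_{a0+1}F0 *)
  let dA := \sum_(l in S0) \sum_(m : F0)
      ((c2' == c2) && (S' == S0 :\ l) &&
        [forall z, (c0' z : nat) == (c0 z + (z == m))%N])%:R *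
      ((-1) ^+ (nbefore S0 l).+1 * phi1 l m) in
  (* move i = 1 : D_{a2}F2 (x) Lambda^{a1}F1 -> D_{a2-1}F2 (x) Lambda^{a1+1}F1 *)
  let dB := \sum_(l : F2) \sum_(m : F1 | m \notin S0)
      ((c0' == c0) && (S' == m |: S0) &&
        [forall z, ((c2' z : nat) + (z == l))%N == c2 z])%:R *
      ((-1) ^+ (nbefore S0 m) * phi2 l m) in
  (-1) ^+ (mdeg c0) * dA + (-1) ^+ (mdeg c0 + #|S0|) * dB.
End SjComplex.

(* The (SW_j) condition for M with j-th symmetric power N: some finite minimal
   free resolution F of M (of length <= 2 = pd M) is such that S_j F is a free
   resolution of N. *)
Definition SW (j : nat) (M N : lmodType R) : Prop :=
  exists (F : nat -> finType) (d : forall i, F i.+1 -> F i -> R)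
         (e : F 0%N -> M),
    is_resolution d e /\ is_minimal d /\ length_le F 2 /\
    exists e' : SjIdx (F 0%N) (F 1%N) (F 2%N) j 0 -> N,
      @is_resolution N (SjIdx (F 0%N) (F 1%N) (F 2%N) j)
        (@SjD (F 0%N) (F 1%N) (F 2%N) (d 0%N) (d 1%N) j) e'.

End Defs.

From HB Require Import structures.
From mathcomp Require Import all_boot all_order fingroup perm all_algebra.
From Stdlib Require Import ClassicalEpsilon FunctionalExtensionality.
From mathcomp Require Import ring zify.
Set Implicit Arguments.
Unset Strict Implicit.
Unset Printing Implicit Defensive.
Import GRing.Theory.
Local Open Scope ring_scope.

(* The differentials of S_j F are signed sums of entries of those of F, so
   S_j F is minimal when F is; under (SW_j) it is thus a minimal free
   resolution of S_j(M), and beta_t(S_j(M)) is the rank of (S_j F)_t.  A basis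
   of (S_j F)_t consists of the triples (monomial of degree a0 in beta_0
   variables, a1-subset of a basis of F_1, monomial of degree r in beta_2
   variables) with a0 + a1 + r = j and a1 + 2r = t; counting those with a
   given r gives the r-th summand.
   That ranks of minimal resolutions are Betti numbers is the comparison
   theorem: chain maps f : F -> G and g : G -> F over the identity have
   g f = 1 modulo the maximal ideal when F is minimal, and a matrix congruent
   to 1 is invertible, hence does not factor through a free module of smaller
   rank. *)

Section LocalRing.
Variable R : comNzRingType.

Lemma in_max0 : in_max (0 : R).
Proof. by case=> y; rewrite mul0r => /eqP; rewrite eq_sym oner_eq0. Qed.

Lemma in_maxMl (x y : R) : in_max y -> in_max (x * y).
Proof. by move=> ny [z xyz]; apply: ny; exists (x * z); rewrite mulrCA mulrA. Qed.

Lemma in_maxMr (x y : R) : in_max x -> in_max (x * y).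
Proof. by rewrite mulrC; apply: in_maxMl. Qed.

Lemma in_maxN1 : ~ in_max (-1 : R).
Proof. by apply; exists (-1); rewrite mulrNN mulr1. Qed.

Lemma det_mulmx_wide n m (A : 'M[R]_(n, m)) (B : 'M_(m, n)) :
  (m < n)%N -> \det (A *m B) = 0.
Proof.
move=> lt_mn; have [k def_n] : exists k, n = (m + k.+1)%N.
  by exists (n - m).-1; rewrite prednK ?subn_gt0 // subnKC // ltnW.
subst n.
have -> : A *m B = row_mx A (0 : 'M_(m + k.+1, k.+1)) *m col_mx B 0.
  by rewrite mul_row_col mul0mx addr0.
rewrite det_mulmx (expand_det_col _ (rshift m ord0)) big1 ?mul0r // => i _.
by rewrite row_mxEr mxE mul0r.
Qed.

Hypothesis loc : local_ring R.

Lemma in_max_sum (I : Type) (r : seq I) (P : pred I) (F : I -> R) :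
  (forall i, P i -> in_max (F i)) -> in_max (\sum_(i <- r | P i) F i).
Proof. by move=> maxF; apply: (big_ind (@in_max R)); [apply: in_max0 | apply: loc |]. Qed.

Lemma in_max_prod1D_sub1 (I : Type) (r : seq I) (P : pred I) (F : I -> R) :
  (forall i, P i -> in_max (F i)) -> in_max (\prod_(i <- r | P i) (1 + F i) - 1).
Proof.
move=> maxF; apply: (big_ind (fun y => in_max (y - 1))).
- by rewrite subrr; apply: in_max0.
- move=> y z maxy maxz.
  have -> : y * z - 1 = (y - 1) * (z - 1) + ((y - 1) + (z - 1)) by ring.
  by apply: loc; [apply: in_maxMr | apply: loc].
- by move=> i Pi; rewrite addrC addKr; apply: maxF.
Qed.

Lemma in_max_det1D_sub1 n (C : 'M[R]_n) :
  (forall a b, in_max (C a b)) -> in_max (\det (1%:M + C) - 1).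
Proof.
move=> maxC; rewrite /determinant (bigD1 1%g) //= odd_perm1 expr0 mul1r addrAC.
apply: loc.
  under eq_bigr => i _ do rewrite perm1 !mxE eqxx.
  exact: in_max_prod1D_sub1.
apply: in_max_sum => s s_neq1; apply: in_maxMl.
have [i moved_i | fixed] := pickP (fun i => s i != i); last first.
  by case/eqP: s_neq1; apply/permP => i; rewrite perm1; apply/eqP/negbFE/fixed.
rewrite (bigD1 i) //= !mxE eq_sym (negbTE moved_i) add0r.
exact/in_maxMr/maxC.
Qed.

(* The determinant shows that [1 + C] is a unit, which a wide product is not. *)
Lemma leq_of_mulmx_eq1D n m (A : 'M[R]_(n, m)) (B : 'M_(m, n)) (C : 'M_n) :
  (forall a b, in_max (C a b)) -> A *m B = 1%:M + C -> (n <= m)%N.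
Proof.
move=> maxC AB; rewrite leqNgt; apply/negP => lt_mn.
by have := in_max_det1D_sub1 maxC; rewrite -AB det_mulmx_wide // sub0r; apply: in_maxN1.
Qed.

End LocalRing.

Section CoefficientArrays.
Variable R : comNzRingType.
Implicit Types A B C D : finType.

Definition mulc A B C (X : A -> B -> R) (Y : B -> C -> R) : A -> C -> R :=
  fun a c => \sum_b X a b * Y b c.

Definition onec A : A -> A -> R := fun a b => (a == b)%:R.

Lemma mulcA A B C D (X : A -> B -> R) (Y : B -> C -> R) (Z : C -> D -> R) :
  mulc (mulc X Y) Z = mulc X (mulc Y Z).
Proof.
do 2 apply: functional_extensionality => ?; rewrite /mulc.
under eq_bigr do rewrite big_distrl /=.
rewrite exchange_big; apply: eq_bigr => b _; rewrite big_distrr.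
by apply: eq_bigr => k _ /=; rewrite mulrA.
Qed.

Lemma mulc1 A B (X : A -> B -> R) : mulc X (@onec B) = X.
Proof.
apply: functional_extensionality => a; apply: functional_extensionality => c.
rewrite /mulc /onec (bigD1 c) //= eqxx mulr1 big1 ?addr0 // => b /negbTE ->.
by rewrite mulr0.
Qed.

Lemma mul1c A B (X : A -> B -> R) : mulc (@onec A) X = X.
Proof.
apply: functional_extensionality => a; apply: functional_extensionality => c.
rewrite /mulc /onec (bigD1 a) //= eqxx mul1r big1 ?addr0 // => b.
by rewrite eq_sym => /negbTE ->; rewrite mul0r.
Qed.

Lemma mul0c A B C (Y : B -> C -> R) : mulc (fun (_ : A) _ => 0) Y = fun _ _ => 0.
Proof.
do 2 apply: functional_extensionality => ?.
by rewrite /mulc big1 // => b _; rewrite mul0r.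
Qed.

Lemma mulcBl A B C (X Y : A -> B -> R) (Z : B -> C -> R) :
  mulc (fun a b => X a b - Y a b) Z = fun a c => mulc X Z a c - mulc Y Z a c.
Proof.
do 2 apply: functional_extensionality => ?.
by rewrite /mulc -sumrB; apply: eq_bigr => b _; rewrite mulrBl.
Qed.

Lemma mulcBr A B C (X : A -> B -> R) (Y Z : B -> C -> R) :
  mulc X (fun a b => Y a b - Z a b) = fun a c => mulc X Y a c - mulc X Z a c.
Proof.
do 2 apply: functional_extensionality => ?.
by rewrite /mulc -sumrB; apply: eq_bigr => b _; rewrite mulrBr.
Qed.

Lemma scale_sum_mulc (V : lmodType R) A B C (X : A -> B -> R) (Y : B -> C -> R)
    (v : C -> V) a :
  \sum_z mulc X Y a z *: v z = \sum_y X a y *: \sum_z Y y z *: v z.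
Proof.
rewrite /mulc; under eq_bigr do rewrite scaler_suml.
rewrite exchange_big; apply: eq_bigr => y _; rewrite scaler_sumr.
by apply: eq_bigr => z _; rewrite scalerA.
Qed.

Lemma scale_sum_onec (V : lmodType R) A (v : A -> V) a :
  \sum_z onec a z *: v z = v a.
Proof.
rewrite /onec (bigD1 a) //= eqxx scale1r big1 ?addr0 // => b.
by rewrite eq_sym => /negbTE ->; rewrite scale0r.
Qed.

End CoefficientArrays.

Arguments onec {R A}.

(* The rows of [phi] are cycles of the resolution in homological degree [i]:
   in degree 0 this means that they are killed by the augmentation [e]. *)
Definition is_cycle (R : comNzRingType) (N : lmodType R) (F : nat -> finType)
    (d : forall i, F i.+1 -> F i -> R) (e : F 0%N -> N) (i : nat) (A : finType)
  : (A -> F i -> R) -> Prop :=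
  match i as i0 return (A -> F i0 -> R) -> Prop with
  | 0 => fun phi => forall a, \sum_y phi a y *: e y = 0
  | i'.+1 => fun phi => forall a z, \sum_y phi a y * d i' y z = 0
  end.
Arguments is_cycle {R N F} d e {i A}.

Section Resolution.
Variables (R : comNzRingType) (N : lmodType R) (F : nat -> finType).
Variables (d : forall i, F i.+1 -> F i -> R) (e : F 0%N -> N).
Arguments d : clear implicits.
Hypothesis resF : is_resolution d e.
Implicit Type A : finType.

Lemma cycle_lift i A (phi : A -> F i -> R) :
  is_cycle d e phi -> exists psi : A -> F i.+1 -> R, phi = mulc psi (d i).
Proof.
case: resF => _ [exact0 exactS] cyc_phi.
have lift_row a : exists w : F i.+1 -> R, forall y, phi a y = \sum_x w x * d i x y.
  by case: i phi cyc_phi => [|i] phi cyc_phi;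
    [apply: (exact0 _).1 | apply: (exactS _ _).1]; apply: cyc_phi.
have [psi psiP] := ClassicalEpsilon.choice _ lift_row.
by exists psi; do 2 apply: functional_extensionality => ?; apply: psiP.
Qed.

Lemma boundary_is_cycle i A (psi : A -> F i.+1 -> R) : is_cycle d e (mulc psi (d i)).
Proof.
case: resF => _ [exact0 exactS].
by case: i psi => [|i] psi a /=;
  [apply: (exact0 _).2 | apply: (exactS _ _).2]; exists (psi a).
Qed.

Lemma augmentation_d0 x : \sum_y d 0%N x y *: e y = 0.
Proof. by have := boundary_is_cycle (i := 0) onec x; rewrite mul1c. Qed.

Lemma d_mulc_d i : mulc (d i.+1) (d i) = fun _ _ => 0.
Proof.
apply: functional_extensionality => a; apply: functional_extensionality => c.
by have := boundary_is_cycle (i := i.+1) onec a c; rewrite mul1c.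
Qed.

Lemma augmentation_lift A (v : A -> N) :
  exists f : A -> F 0%N -> R, forall a, v a = \sum_y f a y *: e y.
Proof. by case: resF => gen _; exact: ClassicalEpsilon.choice (fun a => gen (v a)). Qed.

End Resolution.

Section Comparison.
Variables (R : comNzRingType) (N : lmodType R) (F G : nat -> finType).
Variables (d : forall i, F i.+1 -> F i -> R) (e : F 0%N -> N).
Variables (dG : forall i, G i.+1 -> G i -> R) (eG : G 0%N -> N).
Arguments d : clear implicits.
Arguments dG : clear implicits.
Hypotheses (loc : local_ring R) (resF : is_resolution d e) (resG : is_resolution dG eG).
Hypothesis minF : is_minimal d.

Definition defect i (f : F i -> G i -> R) (g : G i -> F i -> R) : F i -> F i -> R :=
  fun x z => mulc f g x z - onec x z.

(* Invariant of the inductive construction of chain maps [f : F -> G] and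
   [g : G -> F] over the identity of [N] together with a homotopy from [g f]
   to [1]: in degree [i], the defect [g f - 1] agrees modulo the maximal ideal
   with a cycle [K], which the homotopy in degree [i] will absorb. *)
Definition comparison_data i := exists (f : F i -> G i -> R) (g : G i -> F i -> R)
    (K : F i -> F i -> R),
  [/\ is_cycle dG eG (mulc (d i) f), is_cycle d e (mulc (dG i) g), is_cycle d e K,
      forall x z, in_max (defect f g x z - K x z) &
      mulc (d i) K = mulc (d i) (defect f g)].

Lemma in_max_mulc_d i (A : finType) (h : F i -> A -> R) x z : in_max (mulc (d i) h x z).
Proof. by apply: (in_max_sum loc) => y _; apply/in_maxMr/minF. Qed.

Lemma comparison_data0 : comparison_data 0.
Proof.
have [f fP] := augmentation_lift resG e.
have [g gP] := augmentation_lift resF eG.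
exists f, g, (defect f g); split=> /= [a | a | a | x z |//].
- rewrite scale_sum_mulc -[RHS](augmentation_d0 resF a).
  by apply: eq_bigr => y _; rewrite fP.
- rewrite scale_sum_mulc -[RHS](augmentation_d0 resG a).
  by apply: eq_bigr => y _; rewrite gP.
- under eq_bigr do rewrite scalerBl.
  rewrite sumrB scale_sum_mulc scale_sum_onec fP.
  by under eq_bigr do rewrite -gP; rewrite subrr.
- by rewrite subrr; apply: in_max0.
Qed.

Lemma comparison_dataS i : comparison_data i -> comparison_data i.+1.
Proof.
case=> f [g [K [cyc_df cyc_dg cyc_K defect_K dK]]].
have [f' df] := cycle_lift resG cyc_df.
have [g' dg] := cycle_lift resF cyc_dg.
have [h Kh] := cycle_lift resF cyc_K.
exists f', g', (fun x z => defect f' g' x z - mulc (d i) h x z).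
split=> [a z | a z | a z | x z |] /=.
- change (mulc (mulc (d i.+1) f') (dG i) a z = 0).
  by rewrite mulcA -df -mulcA (d_mulc_d resF) mul0c.
- change (mulc (mulc (dG i.+1) g') (d i) a z = 0).
  by rewrite mulcA -dg -mulcA (d_mulc_d resG) mul0c.
- change (mulc (fun x z => defect f' g' x z - mulc (d i) h x z) (d i) a z = 0).
  rewrite mulcBl /defect mulcBl mul1c mulcA -dg -mulcA -df mulcA mulcA -Kh dK.
  by rewrite /defect mulcBr mulc1 subrr.
- by rewrite opprB addrC subrK; apply: in_max_mulc_d.
- rewrite mulcBr -mulcA (d_mulc_d resF) mul0c.
  by do 2 apply: functional_extensionality => ?; rewrite subr0.
Qed.

Lemma defect_in_max i : exists f g, forall x z, in_max (@defect i f g x z).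
Proof.
have [f [g [K [_ _ cyc_K defect_K _]]]] : comparison_data i.
  by elim: i => [|i]; [apply: comparison_data0 | apply: comparison_dataS].
have [h Kh] := cycle_lift resF cyc_K.
exists f, g => x z; rewrite -(subrK (K x z) (defect f g x z)).
apply: loc; first exact: defect_K.
by rewrite Kh /mulc; apply: (in_max_sum loc) => y _; apply/in_maxMl/minF.
Qed.

Lemma card_le_resolution i : (#|F i| <= #|G i|)%N.
Proof.
have [f [g maxD]] := defect_in_max i.
pose A : 'M[R]_(#|F i|, #|G i|) := \matrix_(a, b) f (enum_val a) (enum_val b).
pose B : 'M[R]_(#|G i|, #|F i|) := \matrix_(a, b) g (enum_val a) (enum_val b).
pose C : 'M[R]_(#|F i|) := \matrix_(a, b) defect f g (enum_val a) (enum_val b).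
apply: (leq_of_mulmx_eq1D loc (A := A) (B := B) (C := C)) => [a b|].
  by rewrite mxE.
apply/matrixP => a b; rewrite !mxE /defect /onec (inj_eq enum_val_inj) addrC subrK.
rewrite /mulc (big_enum_val (fun y => f (enum_val a) y * g y (enum_val b))).
by apply: eq_bigr => k _; rewrite !mxE.
Qed.

End Comparison.

Lemma betti_minimal_resolution (R : comNzRingType) (N : lmodType R)
    (F : nat -> finType) (d : forall i, F i.+1 -> F i -> R) (e : F 0%N -> N) :
  local_ring R -> is_resolution d e -> is_minimal d -> forall i, betti N i = #|F i|.
Proof.
move=> loc resF minF i; rewrite /betti; set P := (fun n => _).
have [G [dG [eG [resG [minG <-]]]]] : P (epsilon (inhabits 0%N) P).
  by apply: epsilon_spec; exists #|F i|, F, d, e.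
apply/eqP; rewrite eqn_leq (card_le_resolution loc resF resG minF).
by rewrite (card_le_resolution loc resG resF minG).
Qed.

Section Counting.
Local Open Scope nat_scope.

Lemma card_as_sum (T : finType) (A : {pred T}) : #|A| = \sum_x (x \in A).
Proof. by rewrite -sum1_card big_mkcond; apply: eq_bigr => x _; case: (x \in A). Qed.

Definition monomials (T : finType) (j a : nat) : {set {ffun T -> 'I_j.+1}} :=
  [set c | mdeg c == a].

Lemma leq_mdeg (T : finType) j (c : {ffun T -> 'I_j.+1}) x : c x <= mdeg c.
Proof. by rewrite /mdeg (bigD1 x) //= leq_addr. Qed.

Lemma card_monomials_tuples (T : finType) j a : a <= j ->
  #|monomials T j a| = #|[set t : #|T|.-tuple 'I_a.+1 | \sum_(i <- t) i == a]|.
Proof.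
move=> le_aj; have le_a1j1 : a.+1 <= j.+1 by [].
pose of_tuple (t : #|T|.-tuple 'I_a.+1) : {ffun T -> 'I_j.+1} :=
  [ffun x => widen_ord le_a1j1 (tnth t (enum_rank x))].
pose to_tuple (c : {ffun T -> 'I_j.+1}) : #|T|.-tuple 'I_a.+1 :=
  [tuple inord (c (enum_val i)) | i < #|T|].
have mdeg_of_tuple t : mdeg (of_tuple t) = \sum_(i <- t) i.
  rewrite big_tuple /mdeg (eq_bigl (mem T)) // big_enum_val.
  by apply: eq_bigr => i _; rewrite ffunE /= enum_valK.
rewrite -!sum1dep_card (reindex of_tuple) /=; last first.
  exists to_tuple => [t _ | c].
    by apply: eq_from_tnth => i; rewrite tnth_mktuple ffunE /= enum_valK inord_val.
  move=> /eqP deg_c; apply/ffunP => x; apply: val_inj.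
  by rewrite ffunE /= tnth_mktuple enum_rankK inordK // ltnS -deg_c leq_mdeg.
by apply: eq_bigl => t; rewrite mdeg_of_tuple.
Qed.

Lemma card_monomials (T : finType) j a : a <= j ->
  #|monomials T j a| = 'C(#|T| + a - 1, a).
Proof.
move=> le_aj; rewrite card_monomials_tuples //.
case: #|T| => [|m].
  case: a {le_aj} => [|a].
    rewrite bin0 (_ : [set t | _] = setT) ?cardsT ?card_tuple //.
    by apply/setP => t; rewrite !inE (tuple0 t) big_nil.
  rewrite add0n subSS subn0 bin_small //.
  by apply: eq_card0 => t; rewrite inE (tuple0 t) big_nil.
by rewrite card_ord_partitions addSn subn1 /= -(bin_sub (leq_addl m a)) addnK.
Qed.

Lemma sum_by_mdeg (T : finType) j (H : nat -> nat) K :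
  (forall r, K <= r -> H r = 0) ->
  \sum_(c : {ffun T -> 'I_j.+1}) H (mdeg c) = \sum_(r < K) H r * #|monomials T j r|.
Proof.
move=> H_small; under [RHS]eq_bigr do rewrite card_as_sum big_distrr /=.
rewrite exchange_big /=; apply: eq_bigr => c _.
have [lt_cK | le_Kc] := ltnP (mdeg c) K; last first.
  rewrite H_small // big1 // => r _; rewrite inE (_ : (mdeg c == r) = false) ?muln0 //.
  by apply: contraTF (ltn_ord r) => /eqP <-; rewrite -leqNgt.
rewrite (bigD1 (Ordinal lt_cK)) //= inE eqxx muln1 big1 ?addn0 // => r ne_r.
rewrite inE (_ : (mdeg c == r) = false) ?muln0 //.
by apply: contraNF ne_r => /eqP deg_c; apply/eqP/val_inj; rewrite /= deg_c.
Qed.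

Lemma sum_half_range (f : nat -> nat) j t :
  \sum_(r < t./2.+1 | t - r <= j) f r =
  if t <= j then \sum_(0 <= r < t./2.+1) f r
  else \sum_(t - j <= r < (minn j t./2).+1) f r.
Proof.
rewrite -(big_mkord (fun r => t - r <= j)); case: leqP => [le_tj | lt_jt].
  by apply: eq_bigl => r; apply: leq_trans (leq_subr r t) le_tj.
rewrite [RHS](big_nat_widen _ _ t./2.+1) ?ltnS ?geq_minr //.
rewrite [RHS](big_nat_widenl _ 0) // big_nat_cond [RHS]big_nat_cond.
apply: eq_bigl => r /=; case: (ltnP r t./2.+1) => [lt_rt | _]; rewrite ?andbF //=.
move: lt_rt; rewrite ltnS geq_half_double -muln2 => le_r2t.
by apply/idP/idP; lia.
Qed.

Variables (F0 F1 F2 : finType) (j : nat).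

Lemma sj_okE t (x : sj_base F0 F1 F2 j) : sj_ok t x =
  [&& ((mdeg x.2).*2 <= t) && (t - mdeg x.2 <= j),
      #|x.1.2| == t - (mdeg x.2).*2 & mdeg x.1.1 == j + mdeg x.2 - t].
Proof.
rewrite /sj_ok -!muln2.
apply/andP/and3P => [[/eqP ? /eqP ?] | [/andP[? ?] /eqP ? /eqP ?]].
  by split; [apply/andP; split | apply/eqP | apply/eqP]; lia.
by split; apply/eqP; lia.
Qed.

Lemma card_SjIdx t :
  #|SjIdx F0 F1 F2 j t| = \sum_(r < t./2.+1 | t - r <= j)
    #|monomials F2 j r| * 'C(#|F1|, t - r.*2) * #|monomials F0 j (j + r - t)|.
Proof.
pose H r := if (r.*2 <= t) && (t - r <= j)
  then 'C(#|F1|, t - r.*2) * #|monomials F0 j (j + r - t)| else 0.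
have count_c0_S (c2 : {ffun F2 -> 'I_j.+1}) :
    \sum_(c0 : {ffun F0 -> 'I_j.+1}) \sum_(S : {set F1}) sj_ok t (c0, S, c2) =
    H (mdeg c2).
  rewrite /H; case: ifP => [/andP[le_r2t le_trj] | not_ok]; last first.
    by rewrite big1 // => c0 _; rewrite big1 // => S _; rewrite sj_okE /= not_ok.
  rewrite -card_draws mulnC !card_as_sum big_distrl /=.
  apply: eq_bigr => c0 _; rewrite big_distrr /=.
  by apply: eq_bigr => S _; rewrite !inE mulnb sj_okE /= le_r2t le_trj /= andbC.
rewrite card_sig card_as_sum.
transitivity (\sum_(c0 : {ffun F0 -> 'I_j.+1}) \sum_(S : {set F1})
    \sum_(c2 : {ffun F2 -> 'I_j.+1}) sj_ok t (c0, S, c2)).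
  by rewrite !pair_bigA; apply: eq_bigr => -[[c0 S] c2].
under eq_bigr do rewrite exchange_big /=.
rewrite exchange_big /=; under eq_bigr do rewrite count_c0_S.
rewrite (sum_by_mdeg _ _ (K := t./2.+1)) => [|r]; last first.
  by rewrite /H ltnNge geq_half_double => /negbTE ->.
rewrite [RHS]big_mkcond /=; apply: eq_bigr => r _.
rewrite /H -geq_half_double -ltnS ltn_ord /=.
by case: ifP => // _; rewrite mulnC mulnA.
Qed.
End Counting.

Lemma SjD_minimal (R : comNzRingType) (F0 F1 F2 : finType)
    (phi1 : F1 -> F0 -> R) (phi2 : F2 -> F1 -> R) (j : nat) :
  local_ring R -> (forall x y, in_max (phi1 x y)) -> (forall x y, in_max (phi2 x y)) ->
  is_minimal (@SjD R F0 F1 F2 phi1 phi2 j).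
Proof.
move=> loc max1 max2 i [[[c0 S0] c2] ?] [[[c0' S'] c2'] ?] /=.
by apply: (loc); apply: in_maxMl; do 2 apply: (in_max_sum loc) => ? _;
  do 2 apply: in_maxMl; [apply: max1 | apply: max2].
Qed.

Theorem corollary5p4 (R : comNzRingType) (j : nat) (M N : lmodType R)
    (sigma : {ffun 'I_j -> M} -> N) :
  noetherian R -> local_ring R -> (2 <= j)%N -> fin_gen M ->
  is_pd M 2 -> is_sym_power sigma -> SW j M N ->
  forall p : nat, is_pd N p -> forall t : nat, (t <= p)%N ->
  let b0 := betti M 0 in let b1 := betti M 1 in let b2 := betti M 2 in
  let term := fun r : nat =>
    ('C(b2 + r - 1, r) * 'C(b1, t - r.*2) * 'C(b0 + (j + r - t) - 1, j + r - t))%N in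
  betti N t =
    (if (t <= j)%N then \sum_(0 <= r < t./2.+1) term r
     else \sum_(t - j <= r < (minn j t./2).+1) term r)%N.
Proof.
(* Only locality and (SW_j) are needed; the formula holds for every [t]. *)
move=> _ loc _ _ _ _ [F [d [e [resF [minF [_ [e' resS]]]]]]] p _ t _ b0 b1 b2 term.
have minS := SjD_minimal (j := j) loc (minF 0%N) (minF 1%N).
rewrite (betti_minimal_resolution loc resS minS) card_SjIdx -sum_half_range.
apply: eq_bigr => r le_trj; have := ltn_ord r; rewrite ltnS geq_half_double => le_r2t.
rewrite /term /b0 /b1 /b2 !(betti_minimal_resolution loc resF minF).
by rewrite !card_monomials //; rewrite -muln2 in le_r2t; lia.
Qed.
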